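(* For every $k\in\{1,\dots,J\}$ and every $r\in(0,1)$ with $r<r_0$, \[ -\sum_{j=1}^k u_j\alpha_j+\mu_k^{(r)}-\sum_{j=k}^J w_{jk}\,\mu_j^{(r)}\ \ge\ \frac1J(1-w_{kk})\,r^k, \] where $u=u^{(k)}=(w_{1k},\dots,w_{k-1,k},1,0,\dots,0)\in\mathbb{R}_+^J$ (the $k$th entry is $1$, entries after $k$ are $0$).
   Context: $P$ is a substochastic $J\times J$ routing matrix with $I-P$ invertible; $\alpha_j\ge0$; $\lambda=(\lambda_j)$ solves the traffic equations $\lambda_j=\alpha_j+\sum_{\ell=1}^J\lambda_\ell P_{\ell j}$; $\mu_j^{(r)}=\lambda_j+r^j$ for $j=1,\dots,J$. $(w_{jk})$ is the unique solution in $[0,1]^{J\times J}$ of $w_{jk}=P_{jk}+\sum_{\ell=1}^{k-1}P_{j\ell}w_{\ell k}$ (with $w_{kk}<1$), and $r_0=\min_{\{1\le k<j\le J: w_{jk}\ne0\}}((1-w_{kk})/(Jw_{jk}))^{1/(j-k)}$, taken as $1$ if the set is empty. *)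

From HB Require Import structures.
From mathcomp Require Import all_boot all_order all_algebra.
From mathcomp Require Import reals exp.
Set Implicit Arguments. Unset Strict Implicit. Unset Printing Implicit Defensive.
Import Order.TTheory GRing.Theory Num.Theory.
Local Open Scope ring_scope.

(* Indices 1..J of the paper are the ordinals 'I_J = {0..J-1}; paper index
   j corresponds to ordinal j with value j-1, so r^j becomes r ^+ j.+1. *)

Definition substochastic (R : realType) (J : nat) (P : 'M[R]_J) : Prop :=
  (forall i j, 0 <= P i j) /\ (forall i, \sum_(j < J) P i j <= 1).

Definition traffic_sol (R : realType) (J : nat) (P : 'M[R]_J)
  (alpha lam : 'I_J -> R) : Prop :=
  forall j, lam j = alpha j + \sum_(l < J) lam l * P l j.

Definition mu (R : realType) (J : nat) (lam : 'I_J -> R) (r : R) (j : 'I_J) : R :=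
  lam j + r ^+ j.+1.

Definition w_sol (R : realType) (J : nat) (P w : 'M[R]_J) : Prop :=
  (forall j k, w j k = P j k + \sum_(l < J | (l < k)%N) P j l * w l k) /\
  (forall j k, 0 <= w j k <= 1) /\
  (forall k, w k k < 1).

Definition r0_cands (R : realType) (J : nat) (w : 'M[R]_J) : seq R :=
  [seq powR ((1 - w k k) / (J%:R * w j k)) (((j - k)%N)%:R^-1)
  | k <- enum 'I_J, j <- [seq j : 'I_J <- enum 'I_J | (k < j)%N && (w j k != 0)]].

Definition r0 (R : realType) (J : nat) (w : 'M[R]_J) : R :=
  match r0_cands w with
  | [::] => 1
  | x :: s => foldr Num.min x s
  end.

Definition u_vec (R : realType) (J : nat) (w : 'M[R]_J) (k j : 'I_J) : R :=
  if (j < k)%N then w j k else if j == k then 1 else 0.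

From HB Require Import structures.
From mathcomp Require Import all_boot all_order all_algebra.
From mathcomp Require Import reals exp.
From mathcomp Require Import ring lra.
Set Implicit Arguments. Unset Strict Implicit. Unset Printing Implicit Defensive.
Import Order.TTheory GRing.Theory Num.Theory.
Local Open Scope ring_scope.

(* The defining equation of w says exactly P u^(k) = w_{.k}, so the traffic
   equations give u^(k).alpha = u^(k).lambda - lambda.w_{.k}: all lambda-terms
   cancel and the left-hand side equals (1 - w_kk) r^k - sum_(j > k) w_jk r^j.
   When r < r0, each of these at most J - 1 terms is below (1 - w_kk) r^k / J,
   because r^(j-k) < (1 - w_kk) / (J w_jk). *)

Lemma foldr_min_le (R : realDomainType) (x y : R) (s : seq R) :
  y \in x :: s -> foldr Num.min x s <= y.
Proof.
elim: s y => [|a s IHs] y /=; first by rewrite inE => /eqP ->.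
rewrite ge_min !inE => /orP[/eqP->|/orP[/eqP->|ys]].
- by rewrite IHs ?inE ?eqxx ?orbT.
- by rewrite lexx.
- by rewrite IHs ?inE ?ys ?orbT.
Qed.

Lemma r0_le_cand (R : realType) J (w : 'M[R]_J) y : y \in r0_cands w -> r0 w <= y.
Proof. by rewrite /r0; case: (r0_cands w) => // x s; exact: foldr_min_le. Qed.

Lemma expr_lt_of_lt_powR_inv (R : realType) (x r : R) (n : nat) :
  (0 < n)%N -> 0 < x -> 0 <= r -> r < powR x n%:R^-1 -> r ^+ n < x.
Proof.
move=> n_gt0 x_gt0 r_ge0 lt_r_root.
have root_expn : powR x n%:R^-1 ^+ n = x.
  rewrite -powR_mulrn ?powR_ge0 // -powRrM mulVf ?powRr1 ?ltW //.
  by rewrite pnatr_eq0 -lt0n.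
by rewrite -root_expn ltrXn2r -?lt0n ?powR_ge0.
Qed.

Section Algebra.
Variables (R : realType) (J : nat) (P w : 'M[R]_J) (alpha lam : 'I_J -> R).
Hypothesis hlam : traffic_sol P alpha lam.
Hypothesis w_eq : forall j k, w j k = P j k + \sum_(l < J | (l < k)%N) P j l * w l k.

Lemma sum_u_vec (k : 'I_J) (f : 'I_J -> R) :
  \sum_j u_vec w k j * f j = f k + \sum_(j < J | (j < k)%N) w j k * f j.
Proof.
rewrite (bigID (fun j : 'I_J => (j < k)%N)) /= addrC; congr (_ + _); last first.
  by apply: eq_bigr => j jk; rewrite /u_vec jk.
rewrite (bigD1 k) ?ltnn //= /u_vec ltnn eqxx mul1r big1 ?addr0 // => j /andP[j_k jk].
by rewrite (negbTE j_k) (negbTE jk) mul0r.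
Qed.

Lemma sum_le_u_vec (k : 'I_J) (f : 'I_J -> R) :
  \sum_(j < J | (j <= k)%N) u_vec w k j * f j = \sum_j u_vec w k j * f j.
Proof.
rewrite [RHS](bigID (fun j : 'I_J => (j <= k)%N)) /= [X in _ = _ + X]big1 ?addr0 // => j.
rewrite -ltnNge /u_vec => kj; rewrite ltnNge (ltnW kj) /=.
by rewrite (_ : (j == k) = false) ?mul0r //; apply: contraTF kj => /eqP->; rewrite ltnn.
Qed.

Lemma sum_u_vec_alpha (k : 'I_J) :
  \sum_j u_vec w k j * alpha j = \sum_j u_vec w k j * lam j - \sum_l lam l * w l k.
Proof.
have -> : \sum_j u_vec w k j * alpha j =
    \sum_j (u_vec w k j * lam j - \sum_l lam l * (P l j * u_vec w k j)).
  apply: eq_bigr => j _; rewrite [lam j]hlam mulrDr mulr_sumr.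
  by rewrite (eq_bigr (fun l => lam l * (P l j * u_vec w k j))) ?addrK // => l _; ring.
rewrite sumrB exchange_big /=; congr (_ - _); apply: eq_bigr => l _.
rewrite -mulr_sumr (w_eq l k); congr (_ * _).
under eq_bigr do rewrite mulrC.
by rewrite sum_u_vec; congr (_ + _); apply: eq_bigr => j _; rewrite mulrC.
Qed.

Lemma traffic_u_vec_cancel (k : 'I_J) :
  - (\sum_(j < J | (j <= k)%N) u_vec w k j * alpha j) + lam k
    - \sum_(j < J | (k <= j)%N) w j k * lam j = 0.
Proof.
have split_col : \sum_l lam l * w l k = \sum_(l < J | (l < k)%N) w l k * lam l
    + \sum_(l < J | (k <= l)%N) w l k * lam l.
  rewrite (bigID (fun j : 'I_J => (j < k)%N)) /=.
  congr (_ + _); first by apply: eq_bigr => j _; rewrite mulrC.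
  by apply: eq_big => [j|j _]; [rewrite -leqNgt | rewrite mulrC].
by rewrite sum_le_u_vec sum_u_vec_alpha sum_u_vec split_col; ring.
Qed.

End Algebra.

Section Tail.
Variables (R : realType) (J : nat) (w : 'M[R]_J) (r : R).
Hypotheses (w_ge0 : forall j k, 0 <= w j k) (wkk_lt1 : forall k, w k k < 1).
Hypotheses (r_gt0 : 0 < r) (r_lt_r0 : r < r0 w).

Lemma w_tail_term_le (k j : 'I_J) : (k < j)%N ->
  w j k * r ^+ j.+1 <= J%:R^-1 * (1 - w k k) * r ^+ k.+1.
Proof.
move=> kj.
have wkk : 0 < 1 - w k k by rewrite subr_gt0.
have J_gt0 : 0 < J%:R :> R by rewrite ltr0n; apply: leq_ltn_trans (ltn_ord k).
have [->|wjk_neq0] := eqVneq (w j k) 0.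
  by rewrite mul0r !mulr_ge0 ?invr_ge0 ?ltW ?exprn_gt0.
have wjk_gt0 : 0 < w j k by rewrite lt_def wjk_neq0 w_ge0.
set x := (1 - w k k) / (J%:R * w j k).
have x_gt0 : 0 < x by rewrite divr_gt0 // mulr_gt0.
have cand : powR x (j - k)%N%:R^-1 \in r0_cands w.
  apply/allpairsPdep; exists k, j; split; rewrite ?mem_enum //.
  by rewrite mem_filter kj wjk_neq0 mem_enum.
have rjk : r ^+ (j - k) < x.
  apply: expr_lt_of_lt_powR_inv => //; first by rewrite subn_gt0.
    exact: ltW.
  exact: lt_le_trans r_lt_r0 (r0_le_cand cand).
have -> : r ^+ j.+1 = r ^+ (j - k) * r ^+ k.+1 by rewrite -exprD addnS subnK // ltnW.
rewrite mulrA.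
apply: (@le_trans _ _ (w j k * x * r ^+ k.+1)).
  by rewrite ler_pM2r ?exprn_gt0 // ler_pM2l // ltW.
by rewrite /x le_eqVlt; apply/orP; left; apply/eqP; field; rewrite gt_eqF.
Qed.

Lemma w_tail_sum_le (k : 'I_J) :
  \sum_(j < J | (k < j)%N) w j k * r ^+ j.+1
    <= (1 - w k k) * r ^+ k.+1 - J%:R^-1 * (1 - w k k) * r ^+ k.+1.
Proof.
set c := J%:R^-1 * (1 - w k k) * r ^+ k.+1.
have J_neq0 : J%:R != 0 :> R by rewrite pnatr_eq0 -lt0n; apply: leq_ltn_trans (ltn_ord k).
have c_ge0 : 0 <= c.
  apply: mulr_ge0; last exact/exprn_ge0/ltW.
  by apply: mulr_ge0; rewrite ?invr_ge0 // subr_ge0 ltW.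
have -> : (1 - w k k) * r ^+ k.+1 = \sum_(j < J) c.
  by rewrite sumr_const card_ord -mulr_natl /c !mulrA mulfV ?mul1r.
rewrite [X in _ <= X - _](bigD1 k) //= addrC addrK big_mkcond [X in _ <= X]big_mkcond /=.
apply: ler_sum => j _; case: ifPn => [kj|_]; last by case: ifP.
by rewrite (_ : j != k) ?w_tail_term_le //; apply: contraTneq kj => ->; rewrite ltnn.
Qed.

End Tail.

Theorem mainTheorem8 (R : realType) (J : nat) (P w : 'M[R]_J)
  (alpha lam : 'I_J -> R)
  (hP : substochastic P) (hinv : (1%:M - P) \in unitmx)
  (halpha : forall j, 0 <= alpha j)
  (hlam : traffic_sol P alpha lam)
  (hw : w_sol P w)
  (k : 'I_J) (r : R) (hr0 : 0 < r) (hr1 : r < 1) (hrr0 : r < r0 w) :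
  - (\sum_(j < J | (j <= k)%N) u_vec w k j * alpha j) + mu lam r k
    - \sum_(j < J | (k <= j)%N) w j k * mu lam r j
  >= J%:R^-1 * (1 - w k k) * r ^+ k.+1.
Proof.
have [w_eq [w01 wkk_lt1]] := hw.
have cancel := traffic_u_vec_cancel hlam w_eq k.
have w_ge0 j k' : 0 <= w j k' by case/andP: (w01 j k').
have tail := w_tail_sum_le w_ge0 wkk_lt1 hr0 hrr0 k.
have split_mu : \sum_(j < J | (k <= j)%N) w j k * mu lam r j =
    \sum_(j < J | (k <= j)%N) w j k * lam j + \sum_(j < J | (k <= j)%N) w j k * r ^+ j.+1.
  by rewrite -big_split; apply: eq_bigr => j _; rewrite mulrDr.
have split_diag : \sum_(j < J | (k <= j)%N) w j k * r ^+ j.+1 =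
    w k k * r ^+ k.+1 + \sum_(j < J | (k < j)%N) w j k * r ^+ j.+1.
  rewrite (bigD1 k) //=; congr (_ + _); apply: eq_bigl => j.
  by rewrite ltn_neqAle andbC eq_sym.
rewrite split_mu split_diag /mu; lra.
Qed.
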